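(* For every real $t>\frac32$ there exist unique $t_1>1$ and $t_2\in\mathbb R$ such that $$t^2-tt_1+t_1^2-(t_2-1)^2=0,\qquad 2tt_1-t-t_1+1-2t_2=0.$$ For such $t,t_1,t_2$ one has $t_2>t_1$. *)

From Stdlib Require Export Reals.
Open Scope R_scope.

Definition sys (t t1 t2 : R) : Prop :=
  t ^ 2 - t * t1 + t1 ^ 2 - (t2 - 1) ^ 2 = 0 /\
  2 * t * t1 - t - t1 + 1 - 2 * t2 = 0.

(** The second equation is linear in [t2]; eliminating [t2] leaves a quadratic
    [a x^2 + b x + c] in [t1] with [a > 0 > c] for [t > 3/2].  Its roots have
    negative product, so it has exactly one positive root, and that root lies
    beyond every nonnegative point where the quadratic is negative.  The value at
    [1] is [-3 t^2 < 0], giving [t1 > 1]; the value at [(t - 1) / (2 t - 3)] is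
    negative too, and [t1 > (t - 1) / (2 t - 3)] is exactly [t2 > t1]. *)

From Stdlib Require Import Reals Lra Psatz.
Open Scope R_scope.

Definition quad (a b c x : R) : R := a * x ^ 2 + b * x + c.

Lemma quad_factor (a b c x r : R) :
  x <> 0 -> quad a b c x = 0 -> quad a b c r = (r - x) * (a * r - c / x).
Proof.
  unfold quad; intros Hx Hroot.
  assert (Hb : b = - a * x - c / x).
  { apply (Rmult_eq_reg_r x); [|exact Hx]. field_simplify; [nra | exact Hx]. }
  subst b; field; exact Hx.
Qed.

Lemma quad_pos_root_unique (a b c x y : R) :
  0 <= a -> c < 0 -> 0 < x -> 0 < y ->
  quad a b c x = 0 -> quad a b c y = 0 -> y = x.
Proof.
  intros Ha Hc Hx Hy Hrx Hry.
  rewrite (quad_factor a b c x y) in Hry by lra.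
  assert (Hpos : 0 < a * y - c / x).
  { assert (0 < - c / x) by (apply Rdiv_lt_0_compat; lra). nra. }
  apply Rmult_integral in Hry as [Hyx | Hzero]; lra.
Qed.

Lemma quad_neg_lt_pos_root (a b c x r : R) :
  0 <= a -> c < 0 -> 0 < x -> 0 <= r ->
  quad a b c x = 0 -> quad a b c r < 0 -> r < x.
Proof.
  intros Ha Hc Hx Hr Hrx Hneg.
  rewrite (quad_factor a b c x r) in Hneg by lra.
  assert (Hpos : 0 < a * r - c / x).
  { assert (0 < - c / x) by (apply Rdiv_lt_0_compat; lra). nra. }
  nra.
Qed.

Lemma quad_root_gt (a b c r : R) :
  0 < a -> quad a b c r < 0 -> exists x, r < x /\ quad a b c x = 0.
Proof.
  unfold quad; intros Ha Hneg.
  set (D := b ^ 2 - 4 * a * c).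
  (* [D - (2 a r + b)^2 = - 4 a quad(r) > 0] *)
  assert (HD : (2 * a * r + b) ^ 2 < D) by (unfold D; nra).
  assert (Hsqrt : sqrt D * sqrt D = D).
  { apply sqrt_sqrt; pose proof (pow2_ge_0 (2 * a * r + b)); lra. }
  assert (Hlt : 2 * a * r + b < sqrt D).
  { assert (0 <= sqrt D) by apply sqrt_pos.
    destruct (Rlt_or_le (2 * a * r + b) 0); nra. }
  exists ((- b + sqrt D) / (2 * a)); split.
  - apply (Rmult_lt_reg_r (2 * a)); [lra |].
    field_simplify; lra.
  - field_simplify; [| lra].
    replace (sqrt D ^ 2) with (sqrt D * sqrt D) by ring.
    rewrite Hsqrt; unfold D; field_simplify; lra.
Qed.

Definition sys_quad (t : R) : R -> R :=
  quad ((2 * t - 3) * (2 * t + 1)) (- 2 * (2 * t + 1) * (t - 1)) (- (t - 1) * (3 * t + 1)).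

Lemma sys_iff (t t1 t2 : R) :
  sys t t1 t2 <-> t2 = (2 * t * t1 - t - t1 + 1) / 2 /\ sys_quad t t1 = 0.
Proof.
  unfold sys, sys_quad, quad; split.
  - intros [Hcirc Hlin].
    assert (Ht2 : t2 = (2 * t * t1 - t - t1 + 1) / 2) by lra.
    split; [exact Ht2 |]. subst t2; nra.
  - intros [Ht2 Hq]. subst t2; split; [nra | lra].
Qed.

Lemma sys_quad_at_1 (t : R) : sys_quad t 1 = - 3 * t ^ 2.
Proof. unfold sys_quad, quad; ring. Qed.

Lemma sys_quad_at_threshold_neg (t : R) :
  3 / 2 < t -> sys_quad t ((t - 1) / (2 * t - 3)) < 0.
Proof.
  intro Ht.
  assert (Hval : sys_quad t ((t - 1) / (2 * t - 3))
                 = - ((2 * t + 1) * (t - 1) ^ 2 / (2 * t - 3)) - (t - 1) * (3 * t + 1)).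
  { unfold sys_quad, quad; field; lra. }
  rewrite Hval.
  assert (0 <= (2 * t + 1) * (t - 1) ^ 2 / (2 * t - 3)).
  { apply Rle_mult_inv_pos; [nra | lra]. }
  nra.
Qed.

Section Solution.

Variable t : R.
Hypothesis Ht : 3 / 2 < t.

Let a_pos : 0 < (2 * t - 3) * (2 * t + 1).
Proof. nra. Qed.

Let c_neg : - (t - 1) * (3 * t + 1) < 0.
Proof. nra. Qed.

Lemma sys_quad_root_unique (x y : R) :
  0 < x -> 0 < y -> sys_quad t x = 0 -> sys_quad t y = 0 -> y = x.
Proof. apply quad_pos_root_unique; lra. Qed.

Lemma sys_solution_gt (t1 t2 : R) : 1 < t1 -> sys t t1 t2 -> t1 < t2.
Proof.
  intros Ht1 Hsys; apply sys_iff in Hsys as [Ht2 Hq].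
  assert (Hr : (t - 1) / (2 * t - 3) < t1).
  { refine (quad_neg_lt_pos_root _ _ _ _ _ (Rlt_le _ _ a_pos) c_neg _ _ Hq
              (sys_quad_at_threshold_neg t Ht)); [lra |].
    apply Rle_mult_inv_pos; lra. }
  assert (Hmul : t - 1 < (2 * t - 3) * t1).
  { apply (Rmult_lt_compat_l (2 * t - 3)) in Hr; [| lra].
    replace ((2 * t - 3) * ((t - 1) / (2 * t - 3))) with (t - 1) in Hr by (field; lra).
    exact Hr. }
  subst t2; lra.
Qed.

Lemma sys_quad_root_gt_1 : exists x, 1 < x /\ sys_quad t x = 0.
Proof.
  apply quad_root_gt; [exact a_pos |].
  fold (sys_quad t 1); rewrite sys_quad_at_1; nra.
Qed.

End Solution.

Theorem lemma4p5 :
  forall t : R, t > 3 / 2 ->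
    (exists t1 t2 : R, (t1 > 1 /\ sys t t1 t2) /\
       forall s1 s2 : R, s1 > 1 -> sys t s1 s2 -> s1 = t1 /\ s2 = t2) /\
    (forall t1 t2 : R, t1 > 1 -> sys t t1 t2 -> t2 > t1).
Proof.
  intros t Ht.
  split; [| intros t1 t2 Ht1 Hsys; exact (sys_solution_gt t Ht t1 t2 Ht1 Hsys)].
  destruct (sys_quad_root_gt_1 t Ht) as [x [Hx1 Hx]].
  exists x, ((2 * t * x - t - x + 1) / 2); split.
  - split; [lra | apply sys_iff; split; [reflexivity | exact Hx]].
  - intros s1 s2 Hs1 Hsys; apply sys_iff in Hsys as [Hs2 Hq].
    assert (Hs1x : s1 = x) by (apply (sys_quad_root_unique t Ht); lra).
    subst s1; split; [reflexivity | exact Hs2].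
Qed.
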